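(* Let $a,b,c\in\mathbb{R}$ be such that the matrix $$B=\begin{pmatrix}1&a&b\\ a&1&c\\ b&c&1\end{pmatrix}$$ is positive semidefinite. Let $\mathbb{I}\subseteq[0,\infty)$ be an interval and let $f:\mathbb{I}\to[-1,1]$ be a strictly decreasing function with range exactly $[-1,1]$. Suppose that $$f(p+q)=f(p)f(q)-\sqrt{1-f(p)^2}\,\sqrt{1-f(q)^2}$$ for all $p,q$ with $p,q,p+q\in\mathbb{I}$. Then for every arrangement $(x,y,z)$ of $(a,b,c)$, $$f^{-1}(x)\le f^{-1}(y)+f^{-1}(z).$$
   Context: Positive semidefinite means symmetric (Hermitian) with nonnegative quadratic form. $f^{-1}$ denotes the inverse function of $f$, defined on $[-1,1]$. *)

From Stdlib Require Import Reals Lra Permutation List.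
Open Scope R_scope.

Definition matB (a b c : R) (i j : nat) : R :=
  match i, j with
  | 0, 0 => 1 | 0, 1 => a | 0, 2 => b
  | 1, 0 => a | 1, 1 => 1 | 1, 2 => c
  | 2, 0 => b | 2, 1 => c | 2, 2 => 1
  | _, _ => 0
  end.

(* Positive semidefinite 3x3 real matrix: symmetric with nonnegative
   quadratic form.  sum_f_R0 g 2 = g 0 + g 1 + g 2. *)
Definition psd3 (M : nat -> nat -> R) : Prop :=
  (forall i j, (i < 3)%nat -> (j < 3)%nat -> M i j = M j i) /\
  (forall x : nat -> R,
     0 <= sum_f_R0 (fun i => sum_f_R0 (fun j => x i * M i j * x j) 2) 2).

Definition is_interval (I : R -> Prop) : Prop :=
  forall x y z, I x -> I z -> x <= y <= z -> I y.

(* Put [u = sqrt (1 - y^2)] and [w = sqrt (1 - z^2)].  Evaluating the quadratic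
   form of a positive semidefinite correlation matrix with off-diagonal entries
   [x, y, z] at [(w, u, -(y w + z u))] gives [2 u w (u w + x - y z) >= 0], i.e.
   [x >= y z - u w] when [u w > 0] (the degenerate cases use other vectors).
   By the functional equation, [y z - u w = f (f^-1 y + f^-1 z)], and since [f]
   is decreasing, [f (f^-1 x) >= f (f^-1 y + f^-1 z)] yields the inequality.
   The form is invariant under permuting [x, y, z] together with the vector,
   so every arrangement of [(a, b, c)] may be used. *)

From Stdlib Require Import Reals Permutation List Lra Psatz.
Open Scope R_scope.

Definition corr_form (x y z v0 v1 v2 : R) : R :=
  v0 * v0 + v1 * v1 + v2 * v2 + 2 * x * v0 * v1 + 2 * y * v0 * v2 + 2 * z * v1 * v2.

Definition corr_psd (x y z : R) : Prop :=
  forall v0 v1 v2, 0 <= corr_form x y z v0 v1 v2.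

Lemma psd3_matB_corr_psd (a b c : R) : psd3 (matB a b c) -> corr_psd a b c.
Proof.
  intros [_ hQ] v0 v1 v2.
  pose proof (hQ (fun i => match i with 0%nat => v0 | 1%nat => v1 | _ => v2 end)) as H.
  simpl in H; unfold corr_form; lra.
Qed.

Lemma corr_psd_swap12 (x y z : R) : corr_psd x y z -> corr_psd y x z.
Proof. intros H v0 v1 v2; specialize (H v0 v2 v1); unfold corr_form in *; lra. Qed.

Lemma corr_psd_swap23 (x y z : R) : corr_psd x y z -> corr_psd x z y.
Proof. intros H v0 v1 v2; specialize (H v1 v0 v2); unfold corr_form in *; lra. Qed.

Lemma Permutation3_cases {A : Type} {x y z a b c : A} :
  Permutation (x :: y :: z :: nil) (a :: b :: c :: nil) ->
  (x = a /\ y = b /\ z = c) \/ (x = a /\ y = c /\ z = b) \/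
  (x = b /\ y = a /\ z = c) \/ (x = b /\ y = c /\ z = a) \/
  (x = c /\ y = a /\ z = b) \/ (x = c /\ y = b /\ z = a).
Proof.
  intro HP.
  assert (Ha : In a (x :: y :: z :: nil)).
  { apply (Permutation_in a (Permutation_sym HP)); simpl; auto. }
  simpl in Ha; destruct Ha as [E | [E | [E | []]]]; subst a.
  - apply Permutation_cons_inv, Permutation_length_2 in HP.
    destruct HP as [[-> ->] | [-> ->]]; tauto.
  - assert (HP' : Permutation (y :: x :: z :: nil) (y :: b :: c :: nil)).
    { eapply Permutation_trans; [apply perm_swap | exact HP]. }
    apply Permutation_cons_inv, Permutation_length_2 in HP'.
    destruct HP' as [[-> ->] | [-> ->]]; tauto.
  - assert (HP' : Permutation (z :: x :: y :: nil) (z :: b :: c :: nil)).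
    { eapply Permutation_trans; [| exact HP].
      eapply Permutation_trans; [apply perm_swap | apply perm_skip, perm_swap]. }
    apply Permutation_cons_inv, Permutation_length_2 in HP'.
    destruct HP' as [[-> ->] | [-> ->]]; tauto.
Qed.

Lemma Permutation3_invariant {A : Type} {P : A -> A -> A -> Prop}
  (swap12 : forall x y z, P x y z -> P y x z)
  (swap23 : forall x y z, P x y z -> P x z y)
  {x y z a b c : A} :
  Permutation (x :: y :: z :: nil) (a :: b :: c :: nil) -> P a b c -> P x y z.
Proof.
  intros HP Habc.
  destruct (Permutation3_cases HP) as [E | [E | [E | [E | [E | E]]]]];
    destruct E as (-> & -> & ->); auto.
Qed.

Lemma corr_psd_lower_bound (x y z : R) :
  -1 <= y <= 1 -> -1 <= z <= 1 -> corr_psd x y z ->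
  y * z - sqrt (1 - y ^ 2) * sqrt (1 - z ^ 2) <= x.
Proof.
  intros hy hz hQ.
  apply Rnot_lt_le; intro Hlt.
  set (u := sqrt (1 - y ^ 2)) in *.
  set (w := sqrt (1 - z ^ 2)) in *.
  assert (Hu : u * u = 1 - y ^ 2) by (apply sqrt_sqrt; nra).
  assert (Hw : w * w = 1 - z ^ 2) by (apply sqrt_sqrt; nra).
  assert (Hu0 : 0 <= u) by apply sqrt_pos.
  assert (Hw0 : 0 <= w) by apply sqrt_pos.
  destruct (Rle_lt_or_eq_dec 0 (u * w)) as [Hpos | Hzero]; [nra | |].
  - assert (E : corr_form x y z w u (-(y * w + z * u)) = 2 * u * w * (u * w + x - y * z))
      by (unfold corr_form; nra).
    pose proof (hQ w u (-(y * w + z * u))) as H; rewrite E in H; nra.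
  - destruct (Rmult_integral u w (eq_sym Hzero)) as [Hu1 | Hw1].
    + pose proof (hQ 1 (y * z - x) (-y)) as H; unfold corr_form in H.
      rewrite Hu1 in Hu; nra.
    + pose proof (hQ (y * z - x) 1 (-z)) as H; unfold corr_form in H.
      rewrite Hw1 in Hw; nra.
Qed.

Lemma decreasing_le_reflect (I : R -> Prop) (f : R -> R)
  (hdec : forall p q, I p -> I q -> p < q -> f q < f p) (p q : R) :
  I p -> I q -> f q <= f p -> p <= q.
Proof.
  intros Ip Iq Hle; apply Rnot_lt_le; intro Hlt.
  pose proof (hdec q p Iq Ip Hlt); lra.
Qed.

Theorem proposition1 (a b c : R) (I : R -> Prop) (f : R -> R)
  (hB : psd3 (matB a b c))
  (hI : is_interval I)
  (hI0 : forall p, I p -> 0 <= p)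
  (hdec : forall p q, I p -> I q -> p < q -> f q < f p)
  (hrange_in : forall p, I p -> -1 <= f p <= 1)
  (hrange_onto : forall y, -1 <= y <= 1 -> exists p, I p /\ f p = y)
  (hfe : forall p q, I p -> I q -> I (p + q) ->
     f (p + q) = f p * f q - sqrt (1 - (f p) ^ 2) * sqrt (1 - (f q) ^ 2)) :
  forall x y z : R, Permutation (x :: y :: z :: nil) (a :: b :: c :: nil) ->
  forall px py pz : R,
    I px -> f px = x -> I py -> f py = y -> I pz -> f pz = z ->
    px <= py + pz.
Proof.
  intros x y z HP px py pz Ipx <- Ipy <- Ipz <-.
  destruct (Rle_or_lt px (py + pz)) as [Hle | Hgt]; [exact Hle |].
  assert (Isum : I (py + pz)).
  { apply (hI py (py + pz) px); auto; pose proof (hI0 pz Ipz); lra. }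
  assert (Hpsd : corr_psd (f px) (f py) (f pz)).
  { apply (Permutation3_invariant corr_psd_swap12 corr_psd_swap23 HP).
    apply psd3_matB_corr_psd, hB. }
  apply (decreasing_le_reflect I f hdec); auto.
  rewrite (hfe py pz Ipy Ipz Isum).
  apply corr_psd_lower_bound; auto.
Qed.
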